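(* Let $\mathcal G$ be a braided stability groupoid, $R$ a ring, $d\in\mathbb N$, and $V$ a $U\mathcal G$-module. The following are equivalent: (a) there are $U\mathcal G$-modules $P_0,P_1$, both freely generated in ranks $\le d$, and an exact sequence $P_1\to P_0\to V\to0$; (b) the canonical map $\mathrm{Lan}_{\mathrm{inc}_d}(V\circ\mathrm{inc}_d)\to V$ is a natural isomorphism, where $\mathrm{inc}_d\colon U\mathcal G^{\le d}\hookrightarrow U\mathcal G$ is the inclusion of the full subcategory on the objects $0,\dots,d$; (c) for all $n>d$ the canonical map $\mathrm{colim}_{m\to n,\,m\le d}V_m\to V_n$ is an isomorphism; (d) for all $n>d$ the canonical map $\mathrm{colim}_{m\to n,\,m<n}V_m\to V_n$ is an isomorphism.
   Context: Stability groupoid: monoidal groupoid $(\mathcal G,\oplus,0)$ with objects $(\mathbb N,+,0)$, $G_n=\mathrm{Aut}(n)$, $\oplus\colon G_m\times G_n\to G_{m+n}$ injective, $G_0$ trivial, $(G_{l+m}\times1)\cap(1\times G_{m+n})=1\times G_m\times1$ in $G_{l+m+n}$; braided: with braiding $b_{m,n}\in G_{m+n}$. $U\mathcal G$: objects $\mathbb N$, $\mathrm{Hom}(m,n)=G_n/G_{n-m}$ for $m\le n$ ($G_{n-m}\subset G_n$ via $g\mapsto g\oplus\mathrm{id}_m$), empty otherwise, composition $fG_l\circ gG_m=f(\mathrm{id}_l\oplus g)G_{l+m}$. A $U\mathcal G$-module is a functor $V\colon U\mathcal G\to R\text{-Mod}$, $V_n=V(n)$; it is freely generated in ranks $\le d$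 if isomorphic to $\bigoplus_jR\mathrm{Hom}(m_j,-)$ with all $m_j\le d$. The colimits in (c) and (d) are taken over the comma categories whose objects are morphisms $m\to n$ in $U\mathcal G$ with $m\le d$ (resp. $m<n$), of the functor $(m\to n)\mapsto V_m$. *)

From HB Require Import structures.
From mathcomp Require Import all_boot all_algebra.
Set Implicit Arguments. Unset Strict Implicit. Unset Printing Implicit Defensive.
Import GRing.Theory.

Definition tcast (T : nat -> Type) (m n : nat) (e : m = n) (x : T m) : T n :=
  match e in _ = k return T k with erefl => x end.
Arguments tcast T {m n} e x.

(** Data: the groups G_n = Aut(n), the monoidal sum
    (+) : G_m x G_n -> G_(m+n), and the braidings b_(m,n) in G_(m+n).
    Composition in the groupoid is written [gmul f g] (= f o g). *)
Record GData := {
  grp : nat -> Type;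
  gmul : forall n, grp n -> grp n -> grp n;
  gone : forall n, grp n;
  ginv : forall n, grp n -> grp n;
  gsum : forall m n, grp m -> grp n -> grp (m + n);
  braid : forall m n, grp (m + n) }.

Arguments gmul {g n}.
Arguments gone g n : clear implicits.
Arguments ginv {g n}.
Arguments gsum {g m n}.
Arguments braid g m n : clear implicits.

Definition is_bstab (S : GData) : Prop :=
  (forall n (x y z : grp S n), gmul x (gmul y z) = gmul (gmul x y) z) /\
  (forall n (x : grp S n), gmul (gone S n) x = x) /\
  (forall n (x : grp S n), gmul x (gone S n) = x) /\
  (forall n (x : grp S n), gmul (ginv x) x = gone S n) /\
  (forall n (x : grp S n), gmul x (ginv x) = gone S n) /\
  (forall m n (x x' : grp S m) (y y' : grp S n),
      gsum (gmul x x') (gmul y y') = gmul (gsum x y) (gsum x' y')) /\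
  (forall m n, gsum (gone S m) (gone S n) = gone S (m + n)) /\
  (forall l m n (x : grp S l) (y : grp S m) (z : grp S n),
      gsum (gsum x y) z = tcast (grp S) (addnA l m n) (gsum x (gsum y z))) /\
  (forall n (x : grp S n), gsum (gone S 0) x = x) /\
  (forall n (x : grp S n), gsum x (gone S 0) = tcast (grp S) (esym (addn0 n)) x) /\
  (forall m n (x x' : grp S m) (y y' : grp S n),
      gsum x y = gsum x' y' -> x = x' /\ y = y') /\
  (forall x : grp S 0, x = gone S 0) /\
  (* (G_(l+m) x 1) meet (1 x G_(m+n)) = 1 x G_m x 1 in G_(l+m+n)
     (the inclusion "contains" is automatic) *)
  (forall l m n (x : grp S (l + m)) (y : grp S (m + n)),
      gsum x (gone S n) = tcast (grp S) (addnA l m n) (gsum (gone S l) y) ->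
      exists z : grp S m, gsum x (gone S n) = gsum (gsum (gone S l) z) (gone S n)) /\
  (forall m n (x : grp S m) (y : grp S n),
      gmul (braid S m n) (gsum x y)
      = gmul (tcast (grp S) (addnC n m) (gsum y x)) (braid S m n)) /\
  (forall l m n,
      braid S l (m + n)
      = gmul (tcast (grp S) (addnCA m l n) (gsum (gone S m) (braid S l n)))
             (tcast (grp S) (esym (addnA l m n)) (gsum (braid S l m) (gone S n)))) /\
  (forall l m n,
      braid S (l + m) n
      = gmul (tcast (grp S) (addnAC l n m) (gsum (braid S l n) (gone S m)))
             (tcast (grp S) (addnA l m n) (gsum (gone S l) (braid S m n)))).

(** Hom(m,n) = G_n / G_(n-m) for m <= n, where G_(n-m) sits in G_n via
    h |-> h (+) id_m.  A morphism m -> n is represented by f in G_n.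
    [stab H h] is the image of h in G_n, [lift H g] = id_(n-m) (+) g. *)
Definition stab (S : GData) (m n : nat) (H : (m <= n)%N) (h : grp S (n - m))
  : grp S n := tcast (grp S) (subnK H) (gsum h (gone S m)).

Definition lift (S : GData) (m n : nat) (H : (m <= n)%N) (g : grp S m)
  : grp S n := tcast (grp S) (subnK H) (gsum (gone S (n - m)) g).

(** Composition: (f G_(n-m)) o (g G_(m-k)) = f (id_(n-m) (+) g) G_(n-k). *)

(** [act m n H f] is V(f G_(n-m)) : V_m -> V_n. *)
Record UGmod (S : GData) (R : pzRingType) := {
  ev : nat -> lmodType R;
  act : forall m n, (m <= n)%N -> grp S n -> ev m -> ev n }.

Arguments ev {S R}.
Arguments act {S R} u {m n}.

Definition is_UGmod S R (V : UGmod S R) : Prop :=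
  (forall m n (H : (m <= n)%N) f (a : R) (u v : ev V m),
      act V H f (a *: u + v)%R = (a *: act V H f u + act V H f v)%R) /\
  (forall m n (H : (m <= n)%N) f (h : grp S (n - m)) (v : ev V m),
      act V H (gmul f (stab H h)) v = act V H f v) /\
  (forall n (H : (n <= n)%N) (v : ev V n), act V H (gone S n) v = v) /\
  (forall k m n (Hkm : (k <= m)%N) (Hmn : (m <= n)%N) (Hkn : (k <= n)%N)
          (f : grp S n) (g : grp S m) (v : ev V k),
      act V Hmn f (act V Hkm g v) = act V Hkn (gmul f (lift Hmn g)) v).

Definition is_hom S R (V W : UGmod S R) (t : forall n, ev V n -> ev W n) : Prop :=
  (forall n (a : R) (u v : ev V n), t n (a *: u + v)%R = (a *: t n u + t n v)%R) /\
  (forall m n (H : (m <= n)%N) f (v : ev V m),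
      t n (act V H f v) = act W H f (t m v)).
Arguments is_hom {S R} V W t.

(** Natural transformations V o inc_d -> W o inc_d, where inc_d is the
    inclusion of the full subcategory of UG on 0..d (values of [t] at
    n > d are irrelevant). *)
Definition is_hom_le S R (d : nat) (V W : UGmod S R)
  (t : forall n, ev V n -> ev W n) : Prop :=
  (forall n, (n <= d)%N -> forall (a : R) (u v : ev V n),
      t n (a *: u + v)%R = (a *: t n u + t n v)%R) /\
  (forall m n (H : (m <= n)%N) f (v : ev V m), (n <= d)%N ->
      t n (act V H f v) = act W H f (t m v)).
Arguments is_hom_le {S R} d V W t.

(** P is freely generated in ranks <= d, i.e. P is isomorphic to
    (+)_j R Hom(m_j, -) with all m_j <= d.  Expressed through the defining
    universal property of (+)_j R Hom(m_j,-): P is the free UG-module on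
    elements x_j in P_(m_j). *)
Definition free_le S R (d : nat) (P : UGmod S R) : Prop :=
  exists (J : Type) (mj : J -> nat) (x : forall j, ev P (mj j)),
    (forall j, (mj j <= d)%N) /\
    forall W : UGmod S R, is_UGmod W ->
    forall w : forall j, ev W (mj j),
      exists t : forall n, ev P n -> ev W n,
        is_hom P W t /\ (forall j, t (mj j) (x j) = w j) /\
        forall t' : forall n, ev P n -> ev W n,
          is_hom P W t' -> (forall j, t' (mj j) (x j) = w j) ->
          forall n p, t' n p = t n p.

Definition condA S R (d : nat) (V : UGmod S R) : Prop :=
  exists P0 P1 : UGmod S R,
    is_UGmod P0 /\ is_UGmod P1 /\ free_le d P0 /\ free_le d P1 /\
    exists (al : forall n, ev P1 n -> ev P0 n) (be : forall n, ev P0 n -> ev V n),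
      is_hom P1 P0 al /\ is_hom P0 V be /\
      (forall n (v : ev V n), exists p, be n p = v) /\
      (forall n (p : ev P0 n), be n p = 0%R <-> exists q, al n q = p).

(** (b): the canonical map Lan_(inc_d)(V o inc_d) -> V is an isomorphism,
    i.e. (V, id : V o inc_d -> V o inc_d) is a left Kan extension of
    V o inc_d along inc_d. *)
Definition condB S R (d : nat) (V : UGmod S R) : Prop :=
  forall W : UGmod S R, is_UGmod W ->
  forall t : forall n, ev V n -> ev W n, is_hom_le d V W t ->
    exists s : forall n, ev V n -> ev W n,
      is_hom V W s /\ (forall n, (n <= d)%N -> forall v, s n v = t n v) /\
      forall s' : forall n, ev V n -> ev W n,
        is_hom V W s' -> (forall n, (n <= d)%N -> forall v, s' n v = t n v) ->
        forall n v, s' n v = s n v.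

(** [colim_at Pm V n]: the canonical map colim_{phi : m -> n, Pm m} V_m -> V_n
    is an isomorphism, i.e. the cocone (V(phi))_phi is a colimit of the
    functor (phi : m -> n) |-> V_m on the comma category of morphisms
    m -> n with Pm m.  Objects are cosets f G_(n-m) (f in G_n); a morphism
    (m,[f]) -> (m',[f']) is [g] : m -> m' with [f'] o [g] = [f]. *)
Definition colim_at S R (Pm : nat -> bool) (V : UGmod S R) (n : nat) : Prop :=
  forall (W : lmodType R)
         (psi : forall m, (m <= n)%N -> grp S n -> ev V m -> W),
    (forall m (H : (m <= n)%N) f (a : R) (u v : ev V m), Pm m ->
        psi m H f (a *: u + v)%R = (a *: psi m H f u + psi m H f v)%R) ->
    (forall m (H : (m <= n)%N) f (h : grp S (n - m)) (v : ev V m), Pm m ->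
        psi m H (gmul f (stab H h)) v = psi m H f v) ->
    (forall m m' (H : (m <= n)%N) (H' : (m' <= n)%N) (Hmm : (m <= m')%N)
            (f f' : grp S n) (g : grp S m') (v : ev V m), Pm m -> Pm m' ->
        (exists h : grp S (n - m), gmul f' (lift H' g) = gmul f (stab H h)) ->
        psi m' H' f' (act V Hmm g v) = psi m H f v) ->
    exists u : ev V n -> W,
      (forall (a : R) (x y : ev V n), u (a *: x + y)%R = (a *: u x + u y)%R) /\
      (forall m (H : (m <= n)%N) f (v : ev V m), Pm m -> u (act V H f v) = psi m H f v) /\
      forall u' : ev V n -> W,
        (forall (a : R) (x y : ev V n), u' (a *: x + y)%R = (a *: u' x + u' y)%R) ->
        (forall m (H : (m <= n)%N) f (v : ev V m), Pm m -> u' (act V H f v) = psi m H f v) ->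
        forall x, u' x = u x.

Definition condC S R (d : nat) (V : UGmod S R) : Prop :=
  forall n, (d < n)%N -> colim_at (fun m => (m <= d)%N) V n.

Definition condD S R (d : nat) (V : UGmod S R) : Prop :=
  forall n, (d < n)%N -> colim_at (fun m => (m < n)%N) V n.

(* Condition (b) says that V is the left Kan extension of its restriction to
   ranks <= d; pointwise, the value of that Kan extension at n is the colimit of
   (c), which gives (b) -> (c) -> (b).  For the direction (b) -> (c) one maps
   into the coinduced module [coind X n], right adjoint to evaluation at n, so
   that a linear map out of V_n becomes a morphism of UG-modules.  A colimit
   over the m <= d at n is also one over the m < n as soon as every V_m with
   d < m < n is such a colimit, and conversely; by induction on n this gives
   (c) <-> (d).  Free modules generated in ranks <= d satisfy (b) by the Yoneda
   lemma, and (b) passes to cokernels, whence (a) -> (b).  Conversely, under (b)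
   the free module on all elements of V in ranks <= d maps onto V, and the free
   module on the elements of its kernel in ranks <= d maps onto the whole
   kernel, because (b) lets a map that kills the kernel in low ranks be
   descended to V. *)

From Pilot Require Import Defs.
From HB Require Import structures.
From mathcomp Require Import all_boot all_algebra.
From mathcomp Require Import boolp finmap.
From mathcomp.multinomials Require Import monalg.
From Stdlib Require Import ClassicalEpsilon.
From mathcomp Require Import zify.
Set Implicit Arguments. Unset Strict Implicit. Unset Printing Implicit Defensive.
Import GRing.Theory.

(* Unqualified, these names refer to the tuple and fintype libraries. *)
Local Notation tcast := Defs.tcast.
Local Notation lift := Defs.lift.

(** * Free modules and cokernels *)

Section LinearFun.
Local Open Scope ring_scope.
Variables (R : pzRingType) (U W : lmodType R) (f : U -> W).
Hypothesis f_lin : linear f.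

Lemma linear_funB u v : f (u - v) = f u - f v.
Proof. exact: zmod_morphism_linear. Qed.

Lemma linear_fun0 : f 0 = 0.
Proof. by rewrite -(subrr 0) linear_funB subrr. Qed.

End LinearFun.

Section FreeModule.
Local Open Scope ring_scope.
Variables (K : choiceType) (R : pzRingType).

Definition fscale (c : R) (g : {malg R[K]}) : {malg R[K]} :=
  \sum_(k <- msupp g) << c * g@_k *g k >>.

Lemma fscaleE c g k : (fscale c g)@_k = c * g@_k.
Proof.
rewrite {2}[g]monalgE !raddf_sum mulr_sumr.
by apply/eq_bigr=> /= i _; rewrite !mcoeffU mulrnAr.
Qed.

Lemma fscaleA c1 c2 g : fscale c1 (fscale c2 g) = fscale (c1 * c2) g.
Proof. by apply/malgP=> k; rewrite !fscaleE mulrA. Qed.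
Lemma fscale1 g : fscale 1 g = g.
Proof. by apply/malgP=> k; rewrite fscaleE mul1r. Qed.
Lemma fscaleDr c g1 g2 : fscale c (g1 + g2) = fscale c g1 + fscale c g2.
Proof. by apply/malgP=> k; rewrite !(mcoeffD, fscaleE) mulrDr. Qed.
Lemma fscaleDl g c1 c2 : fscale (c1 + c2) g = fscale c1 g + fscale c2 g.
Proof. by apply/malgP=> k; rewrite !(mcoeffD, fscaleE) mulrDl. Qed.

(* The module structure of [malg] needs a nonzero ring; here [R] may be zero. *)
Definition freemod := malg K R.
HB.instance Definition _ := GRing.Zmodule.on freemod.
HB.instance Definition _ := GRing.Zmodule_isLmodule.Build R freemod
  fscaleA fscale1 fscaleDr fscaleDl.

Definition fbase (k : K) : freemod := << k >>.

Lemma freemod_coefZ c (g : freemod) k : (c *: g)@_k = c * g@_k.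
Proof. exact: fscaleE. Qed.

Lemma freemodE (g : freemod) : g = \sum_(k <- msupp g) g@_k *: fbase k.
Proof.
rewrite {1}[g]monalgE; apply: eq_bigr => k _; apply/malgP=> k'.
by rewrite freemod_coefZ !mcoeffU mulrnAr mulr1.
Qed.

Definition freemod_ext (W : lmodType R) (x : K -> W) (g : freemod) : W :=
  \sum_(k <- msupp g) g@_k *: x k.

Section Extension.
Variables (W : lmodType R) (x : K -> W).

Lemma freemod_ext_sub (g : freemod) (D : {fset K}) :
  (msupp g `<=` D)%fset -> freemod_ext x g = \sum_(k <- D) g@_k *: x k.
Proof.
move=> sD; apply: big_fset_incl => // k _ kn.
by rewrite mcoeff_outdom // scale0r.
Qed.

Lemma freemod_ext_linear : linear (freemod_ext x).
Proof.
move=> a g h; set D := (msupp g `|` msupp h `|` msupp (a *: g + h))%fset.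
rewrite !(@freemod_ext_sub _ D) ?fsubsetUr //; last 2 first.
- by rewrite /D fsetUC fsetUA fsubsetUr.
- by rewrite /D -fsetUA fsubsetUl.
rewrite scaler_sumr -big_split /=; apply: eq_bigr => k _.
by rewrite mcoeffD freemod_coefZ scalerDl scalerA.
Qed.

Lemma freemod_ext_base k : freemod_ext x (fbase k) = x k.
Proof.
rewrite /freemod_ext /fbase msuppU; case: eqP => [e|_].
  by rewrite big_seq_fset0 -[x k]scale1r e scale0r.
by rewrite big_seq_fset1 mcoeffUU scale1r.
Qed.

End Extension.

Lemma freemod_linear_eq (W : lmodType R) (L1 L2 : freemod -> W) :
  linear L1 -> linear L2 -> (forall k, L1 (fbase k) = L2 (fbase k)) -> L1 =1 L2.
Proof.
move=> L1_lin L2_lin eL g; rewrite (freemodE g).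
elim: (enum_fset (msupp g)) => [|k s IH].
  by rewrite !big_nil (linear_fun0 L1_lin) (linear_fun0 L2_lin).
by rewrite !big_cons L1_lin L2_lin eL IH.
Qed.

End FreeModule.
Arguments fbase {K R} k.

Definition linmap (R : pzRingType) (Y X : lmodType R) (f : Y -> X) (f_lin : linear f)
  : {linear Y -> X} := HB.pack f (GRing.isLinear.Build R Y X *:%R f f_lin).

Section Cokernel.
Local Open Scope ring_scope.
Variables (R : pzRingType) (Y X : lmodType R) (f : {linear Y -> X}).

Definition in_image (x : X) : Prop := exists y, f y = x.

Lemma in_image0 : in_image 0.
Proof. by exists 0; rewrite raddf0. Qed.
Lemma in_imageD x1 x2 : in_image x1 -> in_image x2 -> in_image (x1 + x2).
Proof. by move=> [y1 <-] [y2 <-]; exists (y1 + y2); rewrite raddfD. Qed.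
Lemma in_imageB x1 x2 : in_image x1 -> in_image x2 -> in_image (x1 - x2).
Proof. by move=> [y1 <-] [y2 <-]; exists (y1 - y2); rewrite raddfB. Qed.
Lemma in_imageZ a x : in_image x -> in_image (a *: x).
Proof. by move=> [y <-]; exists (a *: y); rewrite linearZ. Qed.

Definition coset (x : X) : X -> Prop := fun y => in_image (y - x).

Lemma coset_eq x1 x2 : coset x1 = coset x2 <-> in_image (x1 - x2).
Proof.
split=> [e|h].
  have : coset x1 x1 by rewrite /coset subrr; exact: in_image0.
  by rewrite e.
apply/funext => y; apply/propext; rewrite /coset; split=> hy.
  by move: (in_imageD hy h); rewrite addrA subrK.
by move: (in_imageB hy h); rewrite opprB addrA subrK.
Qed.

Record coker := Coker { coker_set : X -> Prop; _ : exists x, coker_set = coset x }.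

HB.instance Definition _ := gen_eqMixin coker.
HB.instance Definition _ := gen_choiceMixin coker.

Definition coker_proj (x : X) : coker := @Coker (coset x) (ex_intro _ x erefl).

Lemma coker_proj_eq x1 x2 : coker_proj x1 = coker_proj x2 <-> in_image (x1 - x2).
Proof.
split=> [e|h]; first by apply/coset_eq; exact: (congr1 coker_set e).
rewrite /coker_proj; move: (ex_intro _ x1 _) (ex_intro _ x2 _).
by rewrite (proj2 (coset_eq x1 x2) h) => ? ?; congr Coker; exact: Prop_irrelevance.
Qed.

Definition coker_repr (q : coker) : X :=
  let: Coker _ ex := q in projT1 (cid ex).

Lemma coker_reprK q : coker_proj (coker_repr q) = q.
Proof.
case: q => A ex /=; case: (cid ex) => x /= e.
by move: ex; rewrite e => ex; congr Coker; exact: Prop_irrelevance.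
Qed.

Lemma coker_ind (P : coker -> Prop) : (forall x, P (coker_proj x)) -> forall q, P q.
Proof. by move=> h q; rewrite -(coker_reprK q). Qed.

Lemma coker_repr_proj x : in_image (coker_repr (coker_proj x) - x).
Proof. by apply/coker_proj_eq; rewrite coker_reprK. Qed.

Definition coker_add q1 q2 := coker_proj (coker_repr q1 + coker_repr q2).
Definition coker_opp q := coker_proj (- coker_repr q).
Definition coker_scale a q := coker_proj (a *: coker_repr q).

Lemma coker_addE x1 x2 : coker_add (coker_proj x1) (coker_proj x2) = coker_proj (x1 + x2).
Proof.
apply/coker_proj_eq; move: (in_imageD (coker_repr_proj x1) (coker_repr_proj x2)).
by rewrite opprD addrACA.
Qed.
Lemma coker_oppE x : coker_opp (coker_proj x) = coker_proj (- x).
Proof.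
apply/coker_proj_eq; move: (in_imageB in_image0 (coker_repr_proj x)).
by rewrite sub0r opprB opprK addrC.
Qed.
Lemma coker_scaleE a x : coker_scale a (coker_proj x) = coker_proj (a *: x).
Proof. by apply/coker_proj_eq; move: (in_imageZ a (coker_repr_proj x)); rewrite scalerBr. Qed.

Lemma coker_addA : associative coker_add.
Proof.
by elim/coker_ind=> x; elim/coker_ind=> y; elim/coker_ind=> z; rewrite !coker_addE addrA.
Qed.
Lemma coker_addC : commutative coker_add.
Proof. by elim/coker_ind=> x; elim/coker_ind=> y; rewrite !coker_addE addrC. Qed.
Lemma coker_add0 : left_id (coker_proj 0) coker_add.
Proof. by elim/coker_ind=> x; rewrite coker_addE add0r. Qed.
Lemma coker_addN : left_inverse (coker_proj 0) coker_opp coker_add.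
Proof. by elim/coker_ind=> x; rewrite coker_oppE coker_addE addNr. Qed.

HB.instance Definition _ :=
  GRing.isZmodule.Build coker coker_addA coker_addC coker_add0 coker_addN.

Lemma coker_scaleA a b q : coker_scale a (coker_scale b q) = coker_scale (a * b) q.
Proof. by elim/coker_ind: q => x; rewrite !coker_scaleE scalerA. Qed.
Lemma coker_scale1 q : coker_scale 1 q = q.
Proof. by elim/coker_ind: q => x; rewrite coker_scaleE scale1r. Qed.
Lemma coker_scaleDr a q1 q2 :
  coker_scale a (coker_add q1 q2) = coker_add (coker_scale a q1) (coker_scale a q2).
Proof.
by elim/coker_ind: q1 => x; elim/coker_ind: q2 => y; rewrite !(coker_scaleE, coker_addE) scalerDr.
Qed.
Lemma coker_scaleDl q a b : coker_scale (a + b) q = coker_add (coker_scale a q) (coker_scale b q).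
Proof. by elim/coker_ind: q => x; rewrite !(coker_scaleE, coker_addE) scalerDl. Qed.

HB.instance Definition _ := GRing.Zmodule_isLmodule.Build R coker
  coker_scaleA coker_scale1 coker_scaleDr coker_scaleDl.

Lemma coker_proj_linear : linear coker_proj.
Proof.
move=> a x y.
by rewrite -[RHS]/(coker_add (coker_scale a (coker_proj x)) (coker_proj y)) coker_scaleE coker_addE.
Qed.

Lemma coker_proj_eq0 x : coker_proj x = 0 <-> in_image x.
Proof. by rewrite -[0]/(coker_proj 0) coker_proj_eq subr0. Qed.

End Cokernel.

(** * Stability groupoids *)

Section Groupoid.
Variable S : GData.
Hypothesis HS : is_bstab S.
Local Notation G := (grp S).

Lemma gmulA n (x y z : G n) : gmul x (gmul y z) = gmul (gmul x y) z.
Proof. by case: HS. Qed.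
Lemma gmul1g n (x : G n) : gmul (gone S n) x = x.
Proof. by case: HS => _ []. Qed.
Lemma gmulg1 n (x : G n) : gmul x (gone S n) = x.
Proof. by case: HS => _ [] _ []. Qed.
Lemma gmulgV n (x : G n) : gmul x (ginv x) = gone S n.
Proof. by case: HS => _ [] _ [] _ [] _ []. Qed.
Lemma gsumM m n (x x' : G m) (y y' : G n) :
  gsum (gmul x x') (gmul y y') = gmul (gsum x y) (gsum x' y').
Proof. by case: HS => _ [] _ [] _ [] _ [] _ []. Qed.
Lemma gsum1 m n : gsum (gone S m) (gone S n) = gone S (m + n).
Proof. by case: HS => _ [] _ [] _ [] _ [] _ [] _ []. Qed.
Lemma gsumA l m n (x : G l) (y : G m) (z : G n) :
  gsum (gsum x y) z = tcast G (addnA l m n) (gsum x (gsum y z)).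
Proof. by case: HS => _ [] _ [] _ [] _ [] _ [] _ [] _ []. Qed.
Lemma gsum0g n (x : G n) : gsum (gone S 0) x = x.
Proof. by case: HS => _ [] _ [] _ [] _ [] _ [] _ [] _ [] _ []. Qed.
Lemma grp0_trivial (x : G 0) : x = gone S 0.
Proof. by case: HS => _ [] _ [] _ [] _ [] _ [] _ [] _ [] _ [] _ [] _ [] _ [] ? _. Qed.

Lemma tcastM a b (e : a = b) (x y : G a) :
  tcast G e (gmul x y) = gmul (tcast G e x) (tcast G e y).
Proof. by case: b / e. Qed.
Lemma tcast1 a b (e : a = b) : tcast G e (gone S a) = gone S b.
Proof. by case: b / e. Qed.

(* Equations between elements of different (propositionally equal) ranks are
   stated in the total space [{n & G n}], where no casts are needed. *)
Lemma Tagged_tcast a b (e : a = b) (x : G a) : Tagged G (tcast G e x) = Tagged G x.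
Proof. by case: b / e. Qed.
Lemma Tagged_inj a (x y : G a) : Tagged G x = Tagged G y -> x = y.
Proof. by move=> /(congr1 (tagged_as (Tagged G x))); rewrite !tagged_asE. Qed.
Lemma Tagged_gone a b : a = b -> Tagged G (gone S a) = Tagged G (gone S b).
Proof. by move=> ->. Qed.
Lemma Tagged_gsum a a' b b' (x : G a) (x' : G a') (y : G b) (y' : G b') :
  Tagged G x = Tagged G x' -> Tagged G y = Tagged G y' ->
  Tagged G (gsum x y) = Tagged G (gsum x' y').
Proof.
move=> ex ey; have ea : a = a' := congr1 tag ex; have eb : b = b' := congr1 tag ey.
case: a' / ea x' ex => x' /Tagged_inj <-; case: b' / eb y' ey => y' /Tagged_inj <-.
by [].
Qed.
Lemma Tagged_gsumA l m n (x : G l) (y : G m) (z : G n) :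
  Tagged G (gsum (gsum x y) z) = Tagged G (gsum x (gsum y z)).
Proof. by rewrite gsumA Tagged_tcast. Qed.
Lemma Tagged_gsum0 a (e : a = 0) (x : G a) m (y : G m) :
  Tagged G (gsum x y) = Tagged G y.
Proof. by subst a; rewrite (grp0_trivial x) gsum0g. Qed.

Lemma liftM m n (H : m <= n) (g1 g2 : G m) :
  lift H (gmul g1 g2) = gmul (lift H g1) (lift H g2).
Proof. by rewrite /lift -tcastM -gsumM gmul1g. Qed.
Lemma lift1 m n (H : m <= n) : lift H (gone S m) = gone S n.
Proof. by rewrite /lift gsum1 tcast1. Qed.
Lemma stabM m n (H : m <= n) (h1 h2 : G (n - m)) :
  stab H (gmul h1 h2) = gmul (stab H h1) (stab H h2).
Proof. by rewrite /stab -tcastM -gsumM gmul1g. Qed.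
Lemma stab1 m n (H : m <= n) : stab H (gone S (n - m)) = gone S n.
Proof. by rewrite /stab gsum1 tcast1. Qed.

Lemma lift_id n (H : n <= n) (g : G n) : lift H g = g.
Proof. by apply: Tagged_inj; rewrite Tagged_tcast (Tagged_gsum0 (subnn n)). Qed.

Lemma stab_id n (H : n <= n) (h : G (n - n)) : stab H h = gone S n.
Proof. by apply: Tagged_inj; rewrite Tagged_tcast (Tagged_gsum0 (subnn n)). Qed.

Lemma lift_lift k m n (Hkm : k <= m) (Hmn : m <= n) (Hkn : k <= n) (g : G k) :
  lift Hmn (lift Hkm g) = lift Hkn g.
Proof.
apply: Tagged_inj; rewrite !Tagged_tcast (Tagged_gsum (erefl _) (Tagged_tcast _ _)).
by rewrite -Tagged_gsumA gsum1; apply: Tagged_gsum (erefl _); apply: Tagged_gone; lia.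
Qed.

Lemma stab_lift_comm m n (H : m <= n) (h : G (n - m)) (g : G m) :
  gmul (stab H h) (lift H g) = gmul (lift H g) (stab H h).
Proof. by rewrite /stab /lift -!tcastM -!gsumM !gmul1g !gmulg1. Qed.

Lemma lift_stab k m n (Hkm : k <= m) (Hmn : m <= n) (Hkn : k <= n) (h : G (m - k)) :
  exists h', lift Hmn (stab Hkm h) = stab Hkn h'.
Proof.
have e : n - m + (m - k) = n - k by lia.
exists (tcast G e (gsum (gone S (n - m)) h)).
apply: Tagged_inj; rewrite !Tagged_tcast (Tagged_gsum (erefl _) (Tagged_tcast _ _)).
by rewrite -Tagged_gsumA; apply: Tagged_gsum (erefl _); rewrite Tagged_tcast.
Qed.

Lemma stab_stab k m n (Hkm : k <= m) (Hmn : m <= n) (Hkn : k <= n) (h : G (n - m)) :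
  exists h', stab Hmn h = stab Hkn h'.
Proof.
have e : n - m + (m - k) = n - k by lia.
exists (tcast G e (gsum h (gone S (m - k)))).
apply: Tagged_inj; rewrite !Tagged_tcast (Tagged_gsum (Tagged_tcast _ _) (erefl _)).
by rewrite Tagged_gsumA gsum1; apply: Tagged_gsum (erefl _) _; apply: Tagged_gone; lia.
Qed.

(* Composition in UG is well defined on cosets, on either side. *)
Lemma coset_mul_lift k m n (Hkm : k <= m) (Hmn : m <= n) (Hkn : k <= n)
  (f : G n) (h : G (n - m)) (g : G m) :
  exists h', gmul (gmul f (stab Hmn h)) (lift Hmn g)
             = gmul (gmul f (lift Hmn g)) (stab Hkn h').
Proof.
have [h' e] := stab_stab Hkm Hmn Hkn h; exists h'.
by rewrite -!gmulA stab_lift_comm e.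
Qed.

Lemma lift_coset k m n (Hkm : k <= m) (Hmn : m <= n) (Hkn : k <= n)
  (g : G m) (h : G (m - k)) :
  exists h', lift Hmn (gmul g (stab Hkm h)) = gmul (lift Hmn g) (stab Hkn h').
Proof. by have [h' e] := lift_stab Hkm Hmn Hkn h; exists h'; rewrite liftM e. Qed.

End Groupoid.

(** * UG-modules and colimits over low ranks *)

Section UGModules.
Variables (S : GData) (R : pzRingType).
Hypothesis HS : is_bstab S.
Local Notation G := (grp S).

Section Module.
Variables (V : UGmod S R) (HV : is_UGmod V).

Lemma act_linear m n (H : m <= n) f : linear (act V H f).
Proof. by case: HV => h _ a u v; apply: h. Qed.
Lemma act_stab m n (H : m <= n) f h v : act V H (gmul f (stab H h)) v = act V H f v.
Proof. by case: HV => _ [hh _]; apply: hh. Qed.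
Lemma act1 n (H : n <= n) v : act V H (gone S n) v = v.
Proof. by case: HV => _ [_ [h _]]; apply: h. Qed.
Lemma actM k m n (Hkm : k <= m) (Hmn : m <= n) (Hkn : k <= n) f g v :
  act V Hmn f (act V Hkm g v) = act V Hkn (gmul f (lift Hmn g)) v.
Proof. by case: HV => _ [_ [_ h]]; apply: h. Qed.
Lemma act_irr m n (H H' : m <= n) f v : act V H f v = act V H' f v.
Proof. by rewrite (eq_irrelevance H H'). Qed.

Lemma colim_at_eq Pm n (C : colim_at Pm V n) (W : lmodType R) (L1 L2 : ev V n -> W) :
  linear L1 -> linear L2 ->
  (forall m (H : m <= n) f v, Pm m -> L1 (act V H f v) = L2 (act V H f v)) ->
  L1 =1 L2.
Proof.
move=> L1_lin L2_lin e.
have [|||u [_ [_ u_uniq]]] := C W (fun m H f v => L1 (act V H f v)).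
- by move=> m H f a x y _; rewrite act_linear L1_lin.
- by move=> m H f h v _; rewrite act_stab.
- by move=> m m' H H' Hmm f f' g v _ _ [h eh]; rewrite (actM Hmm H' H) eh act_stab.
by move=> x; rewrite (u_uniq L1) // (u_uniq L2) // => m H f v /e ->.
Qed.

End Module.

Section Homs.
Implicit Types P Q W : UGmod S R.

Lemma hom_linear P W t (h : is_hom P W t) n : linear (t n).
Proof. by case: h => l _ a u v; apply: l. Qed.
Lemma hom_act P W t (h : is_hom P W t) m n (H : m <= n) f v :
  t n (act P H f v) = act W H f (t m v).
Proof. by case: h => _; apply. Qed.

Lemma hom_comp P Q W a b :
  is_hom P Q a -> is_hom Q W b -> is_hom P W (fun n p => b n (a n p)).
Proof.
move=> ha hb; split=> [n c u v|m n H f v]; first by rewrite (hom_linear ha) (hom_linear hb).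
by rewrite (hom_act ha) (hom_act hb).
Qed.

Lemma hom0 P W : is_UGmod W -> is_hom P W (fun n _ => 0%R).
Proof.
move=> HW; split=> [n c u v|m n H f v]; first by rewrite scaler0 addr0.
by rewrite (linear_fun0 (act_linear HW H f)).
Qed.

End Homs.

Section LowerColimits.
Variables (V : UGmod S R) (HV : is_UGmod V) (d n : nat).
Hypothesis d_lt_n : d < n.
Hypothesis colim_mid : forall m, d < m -> m < n -> colim_at (fun m => m <= d) V m.

Lemma colim_lt_of_le : colim_at (fun m => m <= d) V n -> colim_at (fun m => m < n) V n.
Proof.
move=> C W psi psi_lin psi_stab psi_compat.
have [|||u [u_lin [u_act u_uniq]]] := C W psi.
- by move=> m H f a x y md; apply: psi_lin; lia.
- by move=> m H f h v md; apply: psi_stab; lia.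
- by move=> m m' H H' Hmm f f' g v md m'd eh; apply: psi_compat => //; lia.
have u_act_lt m (H : m <= n) f v : m < n -> u (act V H f v) = psi m H f v.
  move=> mn; case: (leqP m d) => md; first exact: u_act.
  apply: (colim_at_eq HV (colim_mid md mn) (L1 := u \o act V H f)) => //.
  - by move=> a x y /=; rewrite (act_linear HV) u_lin.
  - by move=> a x y; apply: psi_lin.
  move=> m' H' f' v' m'd /=.
  rewrite (actM HV H' H (leq_trans H' H)) u_act //; symmetry; apply: psi_compat; try lia.
  by exists (gone S _); rewrite (stab1 HS) (gmulg1 HS).
exists u; split=> //; split=> // u' u'_lin u'_act.
by apply: u_uniq => // m H f v md; rewrite u'_act //; lia.
Qed.

Section ExtendCocone.
Variables (W : lmodType R) (psi : forall m, m <= n -> G n -> ev V m -> W).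
Hypothesis psi_lin : forall m (H : m <= n) f (a : R) (u v : ev V m), m <= d ->
  psi H f (a *: u + v)%R = (a *: psi H f u + psi H f v)%R.
Hypothesis psi_stab : forall m (H : m <= n) f h v, m <= d ->
  psi H (gmul f (stab H h)) v = psi H f v.
Hypothesis psi_compat : forall m m' (H : m <= n) (H' : m' <= n) (Hmm : m <= m') f f' g v,
  m <= d -> m' <= d -> (exists h, gmul f' (lift H' g) = gmul f (stab H h)) ->
  psi H' f' (act V Hmm g v) = psi H f v.

Lemma psi_irr m (H H' : m <= n) f v : psi H f v = psi H' f v.
Proof. by rewrite (eq_irrelevance H H'). Qed.

(* For d < m < n, the component of the cocone at [f] is induced from the
   colimit V_m of the low ranks. *)
Lemma mid_component_ex m (H : m <= n) (f : G n) :
  exists U : ev V m -> W, d < m -> m < n -> linear U /\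
    forall m' (H' : m' <= m) f' v', m' <= d ->
      U (act V H' f' v') = psi (leq_trans H' H) (gmul f (lift H f')) v'.
Proof.
have [/andP [dm mn]|out] := boolP ((d < m) && (m < n)); last first.
  by exists (fun _ => 0%R) => dm mn; rewrite dm mn in out.
have [|||U [U_lin [U_act _]]] := @colim_mid m dm mn W
    (fun m' H' f' v' => psi (leq_trans H' H) (gmul f (lift H f')) v').
- by move=> m' H' f' a x y m'd; apply: psi_lin.
- move=> m' H' f' h v' m'd /=.
  have [h' ->] := lift_coset HS H' H (leq_trans H' H) f' h.
  by rewrite (gmulA HS) psi_stab.
- move=> m1 m2 H1 H2 Hmm f1 f2 g v m1d m2d [h eh] /=.
  apply: psi_compat => //.
  have [h' e'] := lift_coset HS H1 H (leq_trans H1 H) f1 h.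
  exists h'; rewrite -(gmulA HS) -(lift_lift HS H2 H (leq_trans H2 H)) -(liftM HS).
  by rewrite eh e' (gmulA HS).
by exists U.
Qed.

Definition mid_component m H f := proj1_sig (cid (@mid_component_ex m H f)).

Lemma mid_componentP m H f : d < m -> m < n -> linear (mid_component H f) /\
  forall m' (H' : m' <= m) f' v', m' <= d ->
    mid_component H f (act V H' f' v') = psi (leq_trans H' H) (gmul f (lift H f')) v'.
Proof. by rewrite /mid_component; case: (cid _). Qed.

Definition psi_ext m (H : m <= n) f v :=
  if m <= d then psi H f v else mid_component H f v.

Lemma psi_ext_lin m (H : m <= n) f a x y : m < n ->
  psi_ext H f (a *: x + y)%R = (a *: psi_ext H f x + psi_ext H f y)%R.
Proof.
rewrite /psi_ext => mn; case: (leqP m d) => md; first exact: psi_lin.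
by case: (mid_componentP H f md mn) => + _; apply.
Qed.

Lemma psi_ext_stab m (H : m <= n) f h v : m < n ->
  psi_ext H (gmul f (stab H h)) v = psi_ext H f v.
Proof.
rewrite /psi_ext => mn; case: (leqP m d) => md; first exact: psi_stab.
have [l1 e1] := mid_componentP H (gmul f (stab H h)) md mn.
have [l2 e2] := mid_componentP H f md mn.
apply: (colim_at_eq HV (colim_mid md mn)) => // m' H' f' v' m'd.
rewrite e1 // e2 //.
have [h' ->] := coset_mul_lift HS H' H (leq_trans H' H) f h f'.
by rewrite psi_stab.
Qed.

Lemma psi_ext_compat m m' (H : m <= n) (H' : m' <= n) (Hmm : m <= m') f f' g v :
  m < n -> m' < n -> (exists h, gmul f' (lift H' g) = gmul f (stab H h)) ->
  psi_ext H' f' (act V Hmm g v) = psi_ext H f v.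
Proof.
rewrite /psi_ext => mn m'n [h eh].
case: (leqP m' d) => m'd.
  by rewrite (leq_trans Hmm m'd); apply: psi_compat => //; [exact: leq_trans m'd | exists h].
have [l1 e1] := mid_componentP H' f' m'd m'n.
case: (leqP m d) => md; first by rewrite e1 // eh (psi_irr _ H) psi_stab.
have [l2 e2] := mid_componentP H f md mn.
apply: (colim_at_eq HV (colim_mid md mn) (L1 := mid_component H' f' \o act V Hmm g)) => //.
  by move=> a x y /=; rewrite (act_linear HV) l1.
move=> m'' H'' f'' v'' m''d /=.
rewrite (actM HV H'' Hmm (leq_trans H'' Hmm)) e1 // e2 //.
rewrite (liftM HS) (gmulA HS) eh (lift_lift HS).
have [h' ->] := coset_mul_lift HS H'' H (leq_trans H'' H) f h f''.
by rewrite (psi_irr _ (leq_trans H'' H)) psi_stab.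
Qed.

Lemma psi_ext_act (u : ev V n -> W) : linear u ->
  (forall m (H : m <= n) f v, m <= d -> u (act V H f v) = psi H f v) ->
  forall m (H : m <= n) f v, m < n -> u (act V H f v) = psi_ext H f v.
Proof.
move=> u_lin u_act m H f v mn; rewrite /psi_ext; case: (leqP m d) => md; first exact: u_act.
have [l2 e2] := mid_componentP H f md mn.
apply: (colim_at_eq HV (colim_mid md mn) (L1 := u \o act V H f)) => //.
  by move=> a x y /=; rewrite (act_linear HV) u_lin.
move=> m' H' f' v' m'd /=.
by rewrite (actM HV H' H (leq_trans H' H)) u_act // e2.
Qed.

End ExtendCocone.

Lemma colim_le_of_lt : colim_at (fun m => m < n) V n -> colim_at (fun m => m <= d) V n.
Proof.
move=> D W psi psi_lin psi_stab psi_compat.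
have [|||u [u_lin [u_act u_uniq]]] := D W (psi_ext psi_lin psi_stab psi_compat).
- by move=> m H f a x y; apply: psi_ext_lin.
- by move=> m H f h v; apply: psi_ext_stab.
- by move=> m m' H H' Hmm f f' g v; apply: psi_ext_compat.
exists u; split=> //; split.
  by move=> m H f v md; rewrite u_act /psi_ext ?md //; lia.
move=> u' u'_lin u'_act; apply: u_uniq => // m H f v mn.
exact: (psi_ext_act psi_lin psi_stab psi_compat).
Qed.

End LowerColimits.

Lemma condC_condD (V : UGmod S R) (HV : is_UGmod V) d : condC d V -> condD d V.
Proof.
move=> C n dn; apply: (colim_lt_of_le HV dn) (C n dn) => m dm _.
exact: C.
Qed.

Lemma condD_condC (V : UGmod S R) (HV : is_UGmod V) d : condD d V -> condC d V.
Proof.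
move=> D; elim/ltn_ind=> n IH dn.
apply: (colim_le_of_lt HV dn) (D n dn) => m dm mn.
exact: IH.
Qed.

End UGModules.

Section KanExtension.
Variables (S : GData) (R : pzRingType) (V : UGmod S R) (d : nat).
Hypotheses (HV : is_UGmod V) (C : condC d V).
Variables (W : UGmod S R) (t : forall n, ev V n -> ev W n).
Hypotheses (HW : is_UGmod W) (t_hom : is_hom_le d V W t).
Arguments t : clear implicits.

Let t_lin n : n <= d -> linear (t n).
Proof. by move=> nd a u v; case: t_hom => + _; apply. Qed.
Let t_act m n (H : m <= n) f v : n <= d -> t n (act V H f v) = act W H f (t m v).
Proof. by case: t_hom => _; apply. Qed.

Lemma kan_ext_ex n : exists u : ev V n -> ev W n, [/\ linear u,
  n <= d -> u =1 t n &
  forall m (H : m <= n) f v, m <= d -> u (act V H f v) = act W H f (t m v)].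
Proof.
case: (leqP n d) => nd.
  by exists (t n); split=> // [|m H f v _]; [exact: t_lin | exact: t_act].
have [|||u [u_lin [u_act _]]] := @C n nd (ev W n) (fun m H f v => act W H f (t m v)).
- by move=> m H f a x y md; rewrite t_lin // (act_linear HW).
- by move=> m H f h v _; rewrite (act_stab HW).
- move=> m m' H H' Hmm f f' g v md m'd [h eh].
  by rewrite t_act // (actM HW Hmm H' H) eh (act_stab HW).
by exists u; split=> // /leq_gtF; rewrite nd.
Qed.

Definition kan_ext n := proj1_sig (cid (kan_ext_ex n)).
Arguments kan_ext : clear implicits.

Lemma kan_extP n : [/\ linear (kan_ext n),
  n <= d -> kan_ext n =1 t n &
  forall m (H : m <= n) f v, m <= d -> kan_ext n (act V H f v) = act W H f (t m v)].
Proof. by rewrite /kan_ext; case: (cid _). Qed.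

Lemma kan_ext_hom : is_hom V W kan_ext.
Proof.
split=> [n|m n H f]; first by case: (kan_extP n).
have [ln _ en] := kan_extP n; have [lm tm em] := kan_extP m.
case: (leqP m d) => md v; first by rewrite en // tm.
apply: (colim_at_eq HV (C md) (L1 := kan_ext n \o act V H f)
                             (L2 := act W H f \o kan_ext m)) => //.
- by move=> a x y /=; rewrite (act_linear HV) ln.
- by move=> a x y /=; rewrite lm (act_linear HW).
move=> m' H' f' v' m'd /=.
by rewrite (actM HV H' H (leq_trans H' H)) en // em // (actM HW H' H (leq_trans H' H)).
Qed.

Lemma kan_ext_unique s : is_hom V W s -> (forall n, n <= d -> s n =1 t n) ->
  forall n, s n =1 kan_ext n.
Proof.
move=> s_hom s_low n; have [ln tn en] := kan_extP n.
case: (leqP n d) => nd; first by move=> v; rewrite s_low // tn.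
apply: (colim_at_eq HV (C nd) (L1 := s n) (L2 := kan_ext n)) => // [|m H f v md].
  exact: (hom_linear s_hom).
by rewrite (hom_act s_hom) s_low // en.
Qed.

End KanExtension.

Lemma condC_condB S R (V : UGmod S R) d : is_UGmod V -> condC d V -> condB d V.
Proof.
move=> HV C W HW t t_hom; exists (kan_ext C HW t_hom).
split; first exact: kan_ext_hom.
split=> [n nd v|s s_hom s_low n v]; first by case: (kan_extP C HW t_hom n) => _ ->.
exact: (kan_ext_unique HV C HW t_hom s_hom).
Qed.

(** * Coinduced modules *)

Section TotalOps.
Variables (S : GData) (R : pzRingType).
Local Notation G := (grp S).

(* Total versions of [lift] and [act], with junk values when m > n. *)
Definition liftd m n (g : G m) : G n :=
  if Bool.bool_dec (m <= n) true is left H then lift H g else gone S n.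
Lemma liftdE m n (H : m <= n) g : liftd n g = lift H g.
Proof. by rewrite /liftd; case: Bool.bool_dec => [H'|/(_ H)] //; rewrite (eq_irrelevance H H'). Qed.

Definition actd (P : UGmod S R) m n (f : G n) (p : ev P m) : ev P n :=
  if Bool.bool_dec (m <= n) true is left H then act P H f p else 0%R.
Lemma actdE (P : UGmod S R) m n (H : m <= n) f p : actd f p = act P H f p.
Proof. by rewrite /actd; case: Bool.bool_dec => [H'|/(_ H)] //; rewrite (eq_irrelevance H H'). Qed.
Lemma actdN (P : UGmod S R) m n f (p : ev P m) : n < m -> actd f p = 0%R :> ev P n.
Proof. by rewrite /actd ltnNge; case: Bool.bool_dec => // H; rewrite H. Qed.

End TotalOps.

Section Coinduced.
Variables (S : GData) (R : pzRingType) (X : lmodType R) (N : nat).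
Hypothesis HS : is_bstab S.
Local Notation G := (grp S).
Local Open Scope ring_scope.

(* [coind X N] is right adjoint to evaluation at N.  In rank k it consists of
   the functions on Hom(k, N) = G_N / G_(N-k), i.e. right G_(N-k)-invariant
   functions on G_N, required to vanish when k > N (Hom(k, N) is empty). *)
Definition coind_inv k (phi : G N -> X) : Prop :=
  (forall (H : (k <= N)%N) f h, phi (gmul f (stab H h)) = phi f) /\
  ((N < k)%N -> forall f, phi f = 0).

Record coind_elt k := CoindElt { coind_fun : G N -> X; coind_funP : coind_inv k coind_fun }.

Lemma coind_elt_ext k (a b : coind_elt k) : coind_fun a =1 coind_fun b -> a = b.
Proof.
case: a b => fa pa [fb pb] /= /funext e; subst fb.
by congr CoindElt; exact: Prop_irrelevance.
Qed.

Lemma coind_fun_stab k (a : coind_elt k) (H : (k <= N)%N) f h :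
  coind_fun a (gmul f (stab H h)) = coind_fun a f.
Proof. exact: (proj1 (coind_funP a)). Qed.

Lemma coind_fun_out k (a : coind_elt k) f : (N < k)%N -> coind_fun a f = 0.
Proof. by move/(proj2 (coind_funP a)). Qed.

HB.instance Definition _ k := gen_eqMixin (coind_elt k).
HB.instance Definition _ k := gen_choiceMixin (coind_elt k).

Section LmodStructure.
Variable k : nat.
Implicit Types a b c : coind_elt k.

Lemma coind_inv_add a b : coind_inv k (fun f => coind_fun a f + coind_fun b f).
Proof.
split=> [H f h|Nk f]; first by rewrite !coind_fun_stab.
by rewrite !coind_fun_out // addr0.
Qed.
Lemma coind_inv_opp a : coind_inv k (fun f => - coind_fun a f).
Proof.
split=> [H f h|Nk f]; first by rewrite coind_fun_stab.
by rewrite coind_fun_out // oppr0.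
Qed.
Lemma coind_inv0 : coind_inv k (fun f => 0).
Proof. by []. Qed.
Lemma coind_inv_scale (r : R) a : coind_inv k (fun f => r *: coind_fun a f).
Proof.
split=> [H f h|Nk f]; first by rewrite coind_fun_stab.
by rewrite coind_fun_out // scaler0.
Qed.

Definition coind_add a b := CoindElt (coind_inv_add a b).
Definition coind_opp a := CoindElt (coind_inv_opp a).
Definition coind_zero := CoindElt coind_inv0.
Definition coind_scale r a := CoindElt (coind_inv_scale r a).

Lemma coind_addA : associative coind_add.
Proof. by move=> a b c; apply: coind_elt_ext => f /=; rewrite addrA. Qed.
Lemma coind_addC : commutative coind_add.
Proof. by move=> a b; apply: coind_elt_ext => f /=; rewrite addrC. Qed.
Lemma coind_add0 : left_id coind_zero coind_add.
Proof. by move=> a; apply: coind_elt_ext => f /=; rewrite add0r. Qed.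
Lemma coind_addN : left_inverse coind_zero coind_opp coind_add.
Proof. by move=> a; apply: coind_elt_ext => f /=; rewrite addNr. Qed.

HB.instance Definition _ :=
  GRing.isZmodule.Build (coind_elt k) coind_addA coind_addC coind_add0 coind_addN.

Lemma coind_scaleA r s c : coind_scale r (coind_scale s c) = coind_scale (r * s) c.
Proof. by apply: coind_elt_ext => f /=; rewrite scalerA. Qed.
Lemma coind_scale1 c : coind_scale 1 c = c.
Proof. by apply: coind_elt_ext => f /=; rewrite scale1r. Qed.
Lemma coind_scaleDr r a b :
  coind_scale r (coind_add a b) = coind_add (coind_scale r a) (coind_scale r b).
Proof. by apply: coind_elt_ext => f /=; rewrite scalerDr. Qed.
Lemma coind_scaleDl c r s : coind_scale (r + s) c = coind_add (coind_scale r c) (coind_scale s c).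
Proof. by apply: coind_elt_ext => f /=; rewrite scalerDl. Qed.

HB.instance Definition _ := GRing.Zmodule_isLmodule.Build R (coind_elt k)
  coind_scaleA coind_scale1 coind_scaleDr coind_scaleDl.

End LmodStructure.

Lemma coind_fun_linear k (r : R) (a b : coind_elt k) f :
  coind_fun (r *: a + b) f = r *: coind_fun a f + coind_fun b f.
Proof. by []. Qed.

Section Action.
Variables (k k' : nat) (H : (k <= k')%N) (g : G k') (a : coind_elt k).

Lemma coind_inv_act : coind_inv k'
  (fun f => if (k' <= N)%N then coind_fun a (gmul f (liftd N g)) else 0).
Proof.
split=> [Hk'N f h|Nk f]; last by rewrite leqNgt Nk.
rewrite Hk'N (liftdE Hk'N).
have [h' ->] := coset_mul_lift HS H Hk'N (leq_trans H Hk'N) f h g.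
by rewrite coind_fun_stab.
Qed.

Definition coind_act : coind_elt k' := CoindElt coind_inv_act.

End Action.

Definition coind : UGmod S R := {| ev := coind_elt; act := coind_act |}.

Lemma coind_UGmod : is_UGmod coind.
Proof.
split; [|split; [|split]].
- move=> m n H f r u v; apply: coind_elt_ext => psi /=.
  by case: ifP => _; rewrite ?scaler0 ?addr0.
- move=> m n H f h v; apply: coind_elt_ext => psi /=.
  case: ifP => // nN; rewrite !(liftdE nN).
  have [h' ->] := lift_coset HS H nN (leq_trans H nN) f h.
  by rewrite (gmulA HS) coind_fun_stab.
- move=> n H v; apply: coind_elt_ext => psi /=.
  case: ifP => nN; first by rewrite (liftdE nN) (lift1 HS) (gmulg1 HS).
  by rewrite coind_fun_out // ltnNge nN.
- move=> k m n Hkm Hmn Hkn f g v; apply: coind_elt_ext => psi /=.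
  case: ifP => // nN; have mN := leq_trans Hmn nN.
  by rewrite mN !liftdE (liftM HS) (gmulA HS) (lift_lift HS).
Qed.

Lemma coind_act_eval k (H : (k <= N)%N) g (a : coind_elt k) :
  coind_fun (act coind H g a) (gone S N) = coind_fun a g.
Proof. by rewrite /= leqnn (liftdE (leqnn N)) (lift_id HS) (gmul1g HS). Qed.

Section Transpose.
Variables (P : UGmod S R) (L : ev P N -> X).
Hypotheses (HP : is_UGmod P) (L_lin : linear L).

Lemma coind_inv_transpose k (p : ev P k) : coind_inv k (fun f => L (actd f p)).
Proof.
split=> [H f h|Nk f]; first by rewrite !(actdE H) (act_stab HP).
by rewrite actdN // (linear_fun0 L_lin).
Qed.

Definition coind_transpose k p : coind_elt k := CoindElt (coind_inv_transpose p).

Lemma coind_transposeE k (H : (k <= N)%N) p f :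
  coind_fun (coind_transpose p) f = L (act P H f p).
Proof. by rewrite /= (actdE H). Qed.

Lemma coind_transpose_hom : is_hom P coind coind_transpose.
Proof.
split=> [n r u v|m n H f v]; apply: coind_elt_ext => psi /=.
  case: (leqP n N) => nN; first by rewrite !(actdE nN) (act_linear HP) L_lin.
  by rewrite !actdN // (linear_fun0 L_lin) scaler0 addr0.
case: (leqP n N) => nN; last by rewrite actdN // (linear_fun0 L_lin).
rewrite (actdE nN) (actdE (leq_trans H nN)) (liftdE nN).
by rewrite (actM HP H nN (leq_trans H nN)).
Qed.

Lemma coind_transpose_eval (p : ev P N) : coind_fun (coind_transpose p) (gone S N) = L p.
Proof. by rewrite (coind_transposeE (leqnn N)) (act1 HP). Qed.

End Transpose.

End Coinduced.

Section TransposeEq.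
Variables (S : GData) (R : pzRingType) (X : lmodType R) (N : nat) (P : UGmod S R).
Variables (L1 L2 : ev P N -> X).
Hypotheses (HP : is_UGmod P) (l1 : linear L1) (l2 : linear L2).

Lemma coind_transpose_eq k (p : ev P k) :
  (forall (H : k <= N) f, L1 (act P H f p) = L2 (act P H f p)) ->
  coind_transpose HP l1 p = coind_transpose HP l2 p.
Proof.
move=> e; apply: coind_elt_ext => f.
case: (leqP k N) => kN; first by rewrite !(coind_transposeE _ _ kN) e.
by rewrite /= !actdN // (linear_fun0 l1) (linear_fun0 l2).
Qed.

Lemma coind_transpose_inj (p : ev P N) :
  coind_transpose HP l1 p = coind_transpose HP l2 p -> L1 p = L2 p.
Proof. by move=> e; rewrite -(coind_transpose_eval HP l1) -(coind_transpose_eval HP l2) e. Qed.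

End TransposeEq.

Section LowRanks.
Variables (S : GData) (R : pzRingType) (d : nat).
Hypothesis HS : is_bstab S.
Local Notation G := (grp S).

Lemma hom_le_of_hom (V W : UGmod S R) t : is_hom V W t -> is_hom_le d V W t.
Proof. by move=> t_hom; split=> [n _|m n H f v _]; [exact: hom_linear | exact: hom_act]. Qed.

Lemma hom_le_comp (P V W : UGmod S R) a b :
  is_hom P V a -> is_hom_le d V W b -> is_hom_le d P W (fun n p => b n (a n p)).
Proof.
move=> ha [bl bn]; split=> [n nd c u v|m n H f v nd].
  by rewrite (hom_linear ha) bl.
by rewrite (hom_act ha) bn.
Qed.

Lemma condB_hom_eq (V W : UGmod S R) (s1 s2 : forall n, ev V n -> ev W n) :
  condB d V -> is_UGmod W -> is_hom V W s1 -> is_hom V W s2 ->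
  (forall n, n <= d -> s1 n =1 s2 n) -> forall n, s1 n =1 s2 n.
Proof.
move=> B HW h1 h2 e n x.
have [s [_ [_ s_uniq]]] := B W HW s2 (hom_le_of_hom h2).
by rewrite (s_uniq s1) // (s_uniq s2).
Qed.

Lemma condB_linear_eq (V : UGmod S R) (X : lmodType R) n (L1 L2 : ev V n -> X) :
  is_UGmod V -> condB d V -> linear L1 -> linear L2 ->
  (forall m (H : m <= n) f v, m <= d -> L1 (act V H f v) = L2 (act V H f v)) ->
  L1 =1 L2.
Proof.
move=> HV B l1 l2 e x; apply: (coind_transpose_inj (HP:=HV) (l1:=l1) (l2:=l2)).
apply: (condB_hom_eq B (coind_UGmod X n HS)
  (coind_transpose_hom HS HV l1) (coind_transpose_hom HS HV l2)) => k kd v.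
by apply: coind_transpose_eq => // H f; apply: e.
Qed.

Section CoconeTranspose.
Variables (V : UGmod S R) (n : nat) (W : lmodType R).
Variable psi : forall m, m <= n -> G n -> ev V m -> W.
Hypothesis psi_lin : forall m (H : m <= n) f (a : R) (u v : ev V m), m <= d ->
  psi H f (a *: u + v)%R = (a *: psi H f u + psi H f v)%R.
Hypothesis psi_stab : forall m (H : m <= n) f h v, m <= d ->
  psi H (gmul f (stab H h)) v = psi H f v.
Hypothesis psi_compat : forall m m' (H : m <= n) (H' : m' <= n) (Hmm : m <= m') f f' g v,
  m <= d -> m' <= d -> (exists h, gmul f' (lift H' g) = gmul f (stab H h)) ->
  psi H' f' (act V Hmm g v) = psi H f v.

Definition psid m f v : W :=
  if Bool.bool_dec (m <= n) true is left H then psi H f v else 0%R.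
Lemma psidE m (H : m <= n) f v : psid f v = psi H f v.
Proof. by rewrite /psid; case: Bool.bool_dec => [H'|/(_ H)] //; rewrite (eq_irrelevance H H'). Qed.

(* The low-rank part of the cocone, transposed to a family of maps V_m -> coind W n. *)
Lemma coind_inv_cocone m (v : ev V m) :
  coind_inv m (fun f : G n => if m <= d then psid f v else 0%R).
Proof.
split=> [H f h|nm f]; first by case: ifP => // md; rewrite !(psidE H) psi_stab.
by case: leqP => // md; rewrite /psid; case: Bool.bool_dec => // H; lia.
Qed.

Definition cocone_elt m v : coind_elt S W n m := CoindElt (coind_inv_cocone v).

Lemma cocone_eltE m (H : m <= n) (v : ev V m) f : m <= d ->
  coind_fun (cocone_elt v) f = psi H f v.
Proof. by move=> md /=; rewrite md (psidE H). Qed.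

Lemma cocone_elt_hom_le : d < n -> is_hom_le d V (coind W n HS) cocone_elt.
Proof.
move=> dn; split=> [m md a u v|m k H g v kd]; apply: coind_elt_ext => f.
  by rewrite coind_fun_linear !(cocone_eltE (leq_trans md (ltnW dn))) // psi_lin.
have kn : k <= n by lia.
rewrite /= kd kn (leq_trans H kd) (liftdE kn) !(psidE kn) (psidE (leq_trans H kn)).
apply: psi_compat => //; first exact: leq_trans kd.
by exists (gone S _); rewrite (stab1 HS) (gmulg1 HS).
Qed.

End CoconeTranspose.

Lemma condB_condC (V : UGmod S R) : is_UGmod V -> condB d V -> condC d V.
Proof.
move=> HV B n dn W psi psi_lin psi_stab psi_compat.
have [s [s_hom [s_low _]]] :=
  B _ (coind_UGmod W n HS) _ (cocone_elt_hom_le psi_lin psi_stab psi_compat dn).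
exists (fun x => coind_fun (s n x) (gone S n)); split.
  by move=> a x y; rewrite (hom_linear s_hom) coind_fun_linear.
split=> [m H f v md|u' u'_lin u'_act].
  by rewrite (hom_act s_hom) coind_act_eval s_low // (cocone_eltE psi_stab H).
apply: (condB_linear_eq HV B) => // [a x y|m H f v md].
  by rewrite (hom_linear s_hom) coind_fun_linear.
by rewrite u'_act // (hom_act s_hom) coind_act_eval s_low // (cocone_eltE psi_stab H).
Qed.

End LowRanks.

(** * Free UG-modules and presentations *)

Section FreeModules.
Variables (S : GData) (R : pzRingType) (d : nat).
Hypothesis HS : is_bstab S.

Definition free_on (P : UGmod S R) (J : Type) (mj : J -> nat) (x : forall j, ev P (mj j)) :=
  forall W : UGmod S R, is_UGmod W ->
  forall w : forall j, ev W (mj j),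
    exists t : forall n, ev P n -> ev W n,
      is_hom P W t /\ (forall j, t (mj j) (x j) = w j) /\
      forall t' : forall n, ev P n -> ev W n,
        is_hom P W t' -> (forall j, t' (mj j) (x j) = w j) ->
        forall n p, t' n p = t n p.

Section FreeOn.
Variables (P : UGmod S R) (J : Type) (mj : J -> nat) (x : forall j, ev P (mj j)).
Hypotheses (HP : is_UGmod P) (Px : free_on x).

Lemma free_hom_eq (W : UGmod S R) (t1 t2 : forall n, ev P n -> ev W n) :
  is_UGmod W -> is_hom P W t1 -> is_hom P W t2 ->
  (forall j, t1 (mj j) (x j) = t2 (mj j) (x j)) -> forall n, t1 n =1 t2 n.
Proof.
move=> HW h1 h2 e n p.
have [t [_ [_ t_uniq]]] := Px HW (fun j => t2 (mj j) (x j)).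
by rewrite (t_uniq t1) // (t_uniq t2).
Qed.

Lemma free_linear_eq (X : lmodType R) n (L1 L2 : ev P n -> X) :
  linear L1 -> linear L2 ->
  (forall j (H : mj j <= n) f, L1 (act P H f (x j)) = L2 (act P H f (x j))) ->
  L1 =1 L2.
Proof.
move=> l1 l2 e p; apply: (coind_transpose_inj (HP:=HP) (l1:=l1) (l2:=l2)).
apply: (free_hom_eq (coind_UGmod X n HS)
  (coind_transpose_hom HS HP l1) (coind_transpose_hom HS HP l2)) => j.
exact: coind_transpose_eq.
Qed.

Lemma free_condB : (forall j, mj j <= d) -> condB d P.
Proof.
move=> mjd W HW t [t_lin t_act].
have [T [T_hom [T_x T_uniq]]] := Px HW (fun j => t (mj j) (x j)).
have T_low n : n <= d -> T n =1 t n.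
  move=> nd; apply: free_linear_eq => [||j H f].
  - exact: hom_linear.
  - by move=> a u v; apply: t_lin.
  - by rewrite (hom_act T_hom) T_x t_act.
exists T; split=> //; split=> // s s_hom s_low n p.
by apply: T_uniq => // j; apply: s_low.
Qed.

End FreeOn.

Section Descent.
Variables (P V W : UGmod S R) (be : forall n, ev P n -> ev V n).
Variable sigma : forall n, ev P n -> ev W n.
Arguments be : clear implicits.
Arguments sigma : clear implicits.
Hypotheses (be_hom : is_hom P V be) (be_onto : forall n v, exists p, be n p = v).
Arguments be_onto : clear implicits.

Definition preimage n v := proj1_sig (cid (be_onto n v)).
Arguments preimage : clear implicits.
Lemma preimageK n v : be n (preimage n v) = v.
Proof. by rewrite /preimage; case: (cid _). Qed.

(* The map induced on V by [sigma], meaningful where [sigma] kills ker be. *)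
Definition descend n v := sigma n (preimage n v).
Arguments descend : clear implicits.

Definition kills_ker n := forall p, be n p = 0%R -> sigma n p = 0%R.

Lemma descendE n p : linear (sigma n) -> kills_ker n -> descend n (be n p) = sigma n p.
Proof.
move=> s_lin s_ker; apply/eqP; rewrite -subr_eq0 -(linear_funB s_lin); apply/eqP/s_ker.
by rewrite (linear_funB (hom_linear be_hom (n:=n))) preimageK subrr.
Qed.

Lemma descend_linear n : linear (sigma n) -> kills_ker n -> linear (descend n).
Proof.
move=> s_lin s_ker a u v; rewrite -{1}(preimageK u) -{1}(preimageK v).
by rewrite -(hom_linear be_hom) descendE // s_lin.
Qed.

Lemma descend_act m n (H : m <= n) f v :
  linear (sigma m) -> linear (sigma n) -> kills_ker m -> kills_ker n ->
  (forall p, sigma n (act P H f p) = act W H f (sigma m p)) ->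
  descend n (act V H f v) = act W H f (descend m v).
Proof.
move=> lm ln km kn s_act; rewrite -{1}(preimageK v) -(hom_act be_hom).
by rewrite descendE.
Qed.

End Descent.

Lemma condB_coker (P0 P1 V : UGmod S R) al be :
  condB d P0 -> condB d P1 -> is_hom P1 P0 al -> is_hom P0 V be ->
  (forall n v, exists p, be n p = v) ->
  (forall n p, be n p = 0%R <-> exists q, al n q = p) -> condB d V.
Proof.
move=> B0 B1 al_hom be_hom be_onto exact W HW t t_hom.
have [tl tn] := t_hom.
have [T [T_hom [T_low T_uniq]]] := B0 W HW _ (hom_le_comp be_hom t_hom).
have T_al n q : T n (al n q) = 0%R.
  apply: (condB_hom_eq B1 HW (hom_comp al_hom T_hom) (hom0 _ HW)) => k kd {}q.
  rewrite T_low //= (proj2 (exact k _) (ex_intro _ q erefl)).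
  exact: (linear_fun0 (fun a u v => tl k kd a u v)).
have T_ker n : kills_ker be T n by move=> p /exact [q <-].
have T_lin n := hom_linear T_hom (n:=n).
exists (descend T be_onto); split; [split|split].
- by move=> n; apply: descend_linear.
- by move=> m n H f v; apply: descend_act => // p; apply: (hom_act T_hom).
- by move=> n nd v; rewrite /descend T_low // preimageK.
move=> s s_hom s_low n v; rewrite -(preimageK be_onto v) descendE //.
by apply: (T_uniq _ (hom_comp be_hom s_hom)) => k kd p /=; rewrite s_low.
Qed.

Lemma condA_condB (V : UGmod S R) : condA d V -> condB d V.
Proof.
move=> [P0 [P1 [HP0 [HP1 [[J0 [mj0 [x0 [mj0d Px0]]]] [[J1 [mj1 [x1 [mj1d Px1]]]]]]]]]].
move=> [al [be [al_hom [be_hom [be_onto exact]]]]].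
exact: (condB_coker (free_condB HP0 Px0 mj0d) (free_condB HP1 Px1 mj1d) al_hom be_hom).
Qed.

End FreeModules.

Section FreeUGModule.
Variables (S : GData) (R : pzRingType).
Hypothesis HS : is_bstab S.
Local Notation G := (grp S).

Definition same_coset m k (g f : G k) : Prop :=
  exists H : m <= k, exists h, g = gmul f (stab H h).

Lemma same_coset_refl m k (H : m <= k) (f : G k) : same_coset m f f.
Proof. by exists H, (gone S _); rewrite (stab1 HS) (gmulg1 HS). Qed.
Lemma same_coset_sym m k (g f : G k) : same_coset m g f -> same_coset m f g.
Proof.
move=> [H [h ->]]; exists H, (ginv h).
by rewrite -(gmulA HS) -(stabM HS) (gmulgV HS) (stab1 HS) (gmulg1 HS).
Qed.
Lemma same_coset_trans m k (a b c : G k) :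
  same_coset m a b -> same_coset m b c -> same_coset m a c.
Proof.
move=> [H [h1 ->]] [H' [h2 ->]]; exists H', (gmul h2 h1).
by rewrite (stabM HS) (gmulA HS) (eq_irrelevance H H').
Qed.

Definition coset_rep m k (f : G k) : G k :=
  epsilon (inhabits (gone S k)) (fun g => same_coset m g f).

Lemma coset_rep_same m k (H : m <= k) (f : G k) : same_coset m (coset_rep m f) f.
Proof.
apply: (epsilon_spec (inhabits (gone S k)) (fun g => same_coset m g f)).
by exists f; exact: same_coset_refl.
Qed.
Lemma coset_rep_eq m k (f f' : G k) : same_coset m f f' -> coset_rep m f = coset_rep m f'.
Proof.
move=> e; rewrite /coset_rep; congr epsilon; apply/funext => g; apply/propext.
by split=> h; [exact: same_coset_trans h e | exact: same_coset_trans h (same_coset_sym e)].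
Qed.
Lemma coset_rep_idem m k (H : m <= k) (f : G k) : coset_rep m (coset_rep m f) = coset_rep m f.
Proof. exact/coset_rep_eq/coset_rep_same. Qed.
Lemma coset_rep_id m (f : G m) : coset_rep m f = f.
Proof. by have [H [h ->]] := coset_rep_same (leqnn m) f; rewrite (stab_id HS) (gmulg1 HS). Qed.

Variables (J : Type) (mj : J -> nat).

(* A basis vector of the free module in rank k: a generator j together with a
   morphism mj j -> k, given by the chosen representative of its coset. *)
Record arrow k := Arrow {
  arrow_gen : J; arrow_map : G k; arrow_le : mj arrow_gen <= k;
  arrow_rep : coset_rep (mj arrow_gen) arrow_map = arrow_map }.

Lemma arrow_ext k (a b : arrow k) : arrow_gen a = arrow_gen b -> arrow_map a = arrow_map b -> a = b.
Proof.
case: a b => j f l n [j' f' l' n'] /= ej ef; subst j' f'.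
by congr Arrow; apply: Prop_irrelevance.
Qed.

HB.instance Definition _ k := gen_eqMixin (arrow k).
HB.instance Definition _ k := gen_choiceMixin (arrow k).

Definition arrow_of k j (f : G k) (H : mj j <= k) : arrow k :=
  @Arrow k j (coset_rep (mj j) f) H (coset_rep_idem H f).

Lemma arrow_of_eq k j (f f' : G k) (H H' : mj j <= k) :
  same_coset (mj j) f f' -> arrow_of f H = arrow_of f' H'.
Proof. by move=> e; apply: arrow_ext => //=; apply: coset_rep_eq. Qed.
Lemma arrow_ofK k (a : arrow k) (H : mj (arrow_gen a) <= k) : arrow_of (arrow_map a) H = a.
Proof. by apply: arrow_ext => //=; rewrite arrow_rep. Qed.

Definition freeUG_ev k := freemod (arrow k) R.

Definition freeUG_act k k' (H : k <= k') (g : G k') : freeUG_ev k -> freeUG_ev k' :=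
  freemod_ext (fun a : arrow k =>
    fbase (arrow_of (gmul g (lift H (arrow_map a))) (leq_trans (arrow_le a) H))).

Definition freeUG : UGmod S R := {| ev := freeUG_ev; act := freeUG_act |}.

Lemma freeUG_act_linear k k' (H : k <= k') g : linear (freeUG_act H g).
Proof. exact: freemod_ext_linear. Qed.

Lemma freeUG_UGmod : is_UGmod freeUG.
Proof.
split; [|split; [|split]].
- by move=> m n H f; apply: freemod_ext_linear.
- move=> m n H f h v; rewrite /= /freeUG_act; congr freemod_ext; apply/funext => a.
  congr fbase; apply: arrow_of_eq.
  have [h' ->] := coset_mul_lift HS (arrow_le a) H (leq_trans (arrow_le a) H) f h (arrow_map a).
  by exists (leq_trans (arrow_le a) H), h'.
- move=> n H v /=; apply: (freemod_linear_eq (freeUG_act_linear H _)) => // a.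
  rewrite /freeUG_act freemod_ext_base; congr fbase.
  rewrite -[RHS](arrow_ofK (arrow_le a)); apply: arrow_of_eq.
  by rewrite (lift_id HS) (gmul1g HS); exact: same_coset_refl (arrow_le a) _.
- move=> k m n Hkm Hmn Hkn f g v /=.
  apply: (freemod_linear_eq (L1 := freeUG_act Hmn f \o freeUG_act Hkm g)).
  + by move=> a x y /=; rewrite !freeUG_act_linear.
  + exact: freeUG_act_linear.
  move=> a /=; rewrite /freeUG_act !freemod_ext_base; congr fbase; apply: arrow_of_eq => /=.
  have Hjm := leq_trans (arrow_le a) Hkm.
  have [H1 [h ->]] := coset_rep_same Hjm (gmul g (lift Hkm (arrow_map a))).
  have [h' ->] := lift_coset HS H1 Hmn (leq_trans (arrow_le a) Hkn)
                    (gmul g (lift Hkm (arrow_map a))) h.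
  rewrite (liftM HS) (lift_lift HS) !(gmulA HS).
  by exists (leq_trans (arrow_le a) Hkn), h'.
Qed.

Definition freeUG_gen j : ev freeUG (mj j) := fbase (arrow_of (gone S (mj j)) (leqnn (mj j))).

Lemma freeUG_act_gen k j (H : mj j <= k) (f : G k) :
  act freeUG H f (freeUG_gen j) = fbase (arrow_of f H).
Proof.
rewrite /= /freeUG_act /freeUG_gen freemod_ext_base /=; congr fbase; apply: arrow_of_eq.
by rewrite coset_rep_id (lift1 HS) (gmulg1 HS); exact: same_coset_refl.
Qed.

Lemma freeUG_free : free_on freeUG_gen.
Proof.
move=> W HW w.
pose T k :=
  freemod_ext (fun a : arrow k => act W (arrow_le a) (arrow_map a) (w (arrow_gen a))).
have T_lin k : linear (T k) by apply: freemod_ext_linear.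
have T_base k (a : arrow k) : T k (fbase a) = act W (arrow_le a) (arrow_map a) (w (arrow_gen a)).
  exact: freemod_ext_base.
have T_act m n (H : m <= n) f : T n \o act freeUG H f =1 act W H f \o T m.
  apply: freemod_linear_eq => [a x y|a x y|a] /=.
  - by rewrite freeUG_act_linear T_lin.
  - by rewrite T_lin (act_linear HW).
  have Han := leq_trans (arrow_le a) H.
  rewrite /freeUG_act freemod_ext_base !T_base /= (actM HW (arrow_le a) H Han).
  have [H1 [h ->]] := coset_rep_same Han (gmul f (lift H (arrow_map a))).
  by rewrite [LHS](act_irr _ H1) (act_stab HW); apply: act_irr.
exists T; split; [split=> // m n H f v; exact: T_act|split].
  by move=> j; rewrite T_base /= coset_rep_id (act1 HW).
move=> t' t'_hom t'_gen n p.
apply: (freemod_linear_eq (hom_linear t'_hom (n:=n)) (T_lin n)) => a.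
rewrite T_base -(arrow_ofK (arrow_le a)) -freeUG_act_gen.
by rewrite (hom_act t'_hom (arrow_le a) (arrow_map a) (freeUG_gen _)) t'_gen arrow_ofK.
Qed.

End FreeUGModule.

Section Presentation.
Variables (S : GData) (R : pzRingType) (d : nat).
Hypothesis HS : is_bstab S.

Lemma linear0_fun (U X : lmodType R) : linear (fun _ : U => 0 : X)%R.
Proof. by move=> a x y; rewrite scaler0 addr0. Qed.

Lemma condB_onto (P V : UGmod S R) be : is_UGmod V -> condB d V -> is_hom P V be ->
  (forall m v, m <= d -> exists p, be m p = v) -> forall n v, exists p, be n p = v.
Proof.
move=> HV B be_hom low_onto n v.
pose pi := coker_proj (linmap (hom_linear be_hom (n:=n))).
apply/(coker_proj_eq0 (linmap (hom_linear be_hom (n:=n)))).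
apply: (condB_linear_eq HS HV B (L1 := pi) (coker_proj_linear _) (@linear0_fun _ _)).
move=> m H f w md; have [p <-] := low_onto m w md.
by apply/coker_proj_eq0; exists (act P H f p); exact: (hom_act be_hom).
Qed.

Lemma condB_kills_ker (P V W : UGmod S R) be sigma (be_onto : forall n v, exists p, be n p = v) :
  condB d V -> condB d P -> is_UGmod W -> is_hom P V be -> is_hom P W sigma ->
  (forall k, k <= d -> kills_ker be sigma k) -> forall n, kills_ker be sigma n.
Proof.
move=> BV BP HW be_hom s_hom low n p bp.
have s_lin k := hom_linear s_hom (n:=k).
have t_hom : is_hom_le d V W (descend sigma be_onto).
  split=> [k kd|m k H f v kd]; first exact: (descend_linear be_hom _ (s_lin k) (low k kd)).
  apply: (descend_act be_hom) => //; [exact: low (leq_trans H kd) | exact: low | exact: hom_act].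
have [s [s_hom' [s_low _]]] := BV W HW _ t_hom.
have s_be : forall k q, s k (be k q) = sigma k q.
  apply: (condB_hom_eq BP HW (hom_comp be_hom s_hom') s_hom) => k kd q /=.
  by rewrite s_low // (descendE be_hom be_onto q (s_lin k) (low k kd)).
by rewrite -s_be bp (linear_fun0 (hom_linear s_hom' (n:=n))).
Qed.

Lemma condB_exact (P1 P0 V : UGmod S R) al be (be_onto : forall n v, exists p, be n p = v) :
  is_UGmod P0 -> condB d V -> condB d P0 -> is_hom P1 P0 al -> is_hom P0 V be ->
  (forall k p, k <= d -> be k p = 0%R -> exists q, al k q = p) ->
  forall n p, be n p = 0%R -> exists q, al n q = p.
Proof.
move=> HP0 BV BP0 al_hom be_hom low n p bp.
pose F := linmap (hom_linear al_hom (n:=n)).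
pose sigma : forall k, ev P0 k -> ev (coind (coker F) n HS) k :=
  fun k q => coind_transpose HP0 (coker_proj_linear F) q.
have s_hom : is_hom P0 (coind (coker F) n HS) sigma by apply: coind_transpose_hom.
have sigma_al k q : sigma k (al k q) = 0%R.
  apply: coind_elt_ext => f; case: (leqP k n) => kn; last by rewrite /= actdN.
  rewrite (coind_transposeE _ _ kn) -(hom_act al_hom); apply/coker_proj_eq0.
  by exists (act P1 kn f q).
have sigma_low k : k <= d -> kills_ker be sigma k.
  by move=> kd q /(low k q kd) [q' <-]; exact: sigma_al.
have := condB_kills_ker be_onto BV BP0 (coind_UGmod _ n HS) be_hom s_hom sigma_low bp.
move/(congr1 (fun a => coind_fun a (gone S n))).
by rewrite coind_transpose_eval => /coker_proj_eq0.
Qed.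

Lemma condB_condA (V : UGmod S R) : is_UGmod V -> condB d V -> condA d V.
Proof.
move=> HV B.
pose J0 := {m : nat & {v : ev V m | m <= d}}.
pose P0 := freeUG R HS (fun j : J0 => tag j).
have P0_free := freeUG_free (R := R) HS (mj := fun j : J0 => tag j).
have HP0 : is_UGmod P0 := freeUG_UGmod R HS _.
have [be [be_hom [be_gen _]]] := P0_free V HV (fun j => sval (tagged j)).
have be_onto : forall n v, exists p, be n p = v.
  apply: (condB_onto HV B be_hom) => m v md.
  exact: ex_intro _ _ (be_gen (existT _ m (exist _ v md))).
pose J1 := {m : nat & {p : ev P0 m | m <= d /\ be m p = 0%R}}.
pose P1 := freeUG R HS (fun j : J1 => tag j).
have P1_free := freeUG_free (R := R) HS (mj := fun j : J1 => tag j).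
have [al [al_hom [al_gen _]]] := P1_free P0 HP0 (fun j => sval (tagged j)).
have be_al n q : be n (al n q) = 0%R.
  apply: (free_hom_eq P1_free HV (hom_comp al_hom be_hom) (hom0 _ HV)) => j /=.
  by rewrite al_gen; case: (svalP (tagged j)).
have BP0 : condB d P0 by apply: (free_condB HS HP0 P0_free); case=> m [].
exists P0, P1; split=> //; split; first exact: freeUG_UGmod.
split; first by exists J0, (fun j => tag j), (freeUG_gen R HS _); split=> // -[m []].
split; first by exists J1, (fun j => tag j), (freeUG_gen R HS _); split=> // -[m [p []]].
exists al, be; split=> //; split=> //; split=> // n p; split=> [|[q <-]] //.
apply: (condB_exact be_onto HP0 B BP0 al_hom be_hom) => k {}p kd bp.
exact: ex_intro _ _ (al_gen (existT _ k (exist _ p (conj kd bp)))).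
Qed.

End Presentation.

Theorem proposition6p1 (S : GData) (HS : is_bstab S) (R : pzRingType) (d : nat)
  (V : UGmod S R) (HV : is_UGmod V) :
  (condA d V <-> condB d V) /\ (condA d V <-> condC d V) /\ (condA d V <-> condD d V).
Proof.
have AB : condA d V <-> condB d V.
  by split; [exact: condA_condB | exact: condB_condA].
have BC : condB d V <-> condC d V.
  by split; [exact: condB_condC | exact: condC_condB].
have CD : condC d V <-> condD d V.
  by split; [exact: condC_condD | exact: condD_condC].
by split; [|split]; rewrite AB ?BC // CD.
Qed.
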